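(* Let $f:\{0,1\}^n\to\{0,1\}$. Each of the following quantities is at most $s_0(f)s_1(f)$, and $s_0(f)s_1(f)\le s(f)^2$: (i) (Khrapchenko bound) $\frac{|C|^2}{|A||B|}$ for any nonempty $A\subseteq f^{-1}(0)$, $B\subseteq f^{-1}(1)$, where $C=\{(x,y)\in A\times B: d_H(x,y)=1\}$; (ii) (Koutsoupias bound) $\|Q\|_2^2$ for any such $A,B,C$, where $Q$ is the $A\times B$ $0/1$ matrix with $Q[x,y]=1$ iff $(x,y)\in C$; (iii) (H\aa stad bound) $\frac{\Pr[\mathcal{C}\mid\Delta]^2}{\Pr[\mathcal{A}\mid\Delta]\Pr[\mathcal{B}\mid\Delta]}\left(\frac{1-p}{2p}\right)^2$ for any $p\in(0,1)$ and any filter $\Delta$ with $\Pr[\mathcal{A}\mid\Delta],\Pr[\mathcal{B}\mid\Delta]>0$.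
   Context: For an input $x$, the sensitivity of $f$ on $x$ is the number of $i\in[n]$ such that flipping $x_i$ changes $f$. $s_0(f)$ (resp. $s_1(f)$) is the maximum sensitivity over $x\in f^{-1}(0)$ (resp. $f^{-1}(1)$), and $s(f)=\max(s_0(f),s_1(f))$. $d_H$ is Hamming distance, $\|\cdot\|_2$ the spectral norm. A restriction is a string $\rho\in\{0,1,\star\}^n$; $f|_\rho$ is the function of the $\star$-variables obtained by fixing the other variables as in $\rho$. $R_p$ is the distribution on restrictions setting each variable independently to $\star$ with probability $p$ and to $0$, $1$ each with probability $(1-p)/2$. A filter $\Delta$ is a set of restrictions such that if $\rho\in\Delta$ then every restriction obtained from $\rho$ by fixing one $\star$ to a constant is in $\Delta$. For an event $E$, $\Pr[E\mid\Delta]=\Pr_{\rho\sim R_p}[E\mid\rho\in\Delta]$. $\mathcal{A}$ is the event that $f|_\rho$ is the constant $0$, $\mathcal{B}$ the event that $f|_\rho$ is the constant $1$, and $\mathcal{C}$ the event that $f|_\rho$ is a single literal ($x_i$ or $\neg x_i$ for some free variable $x_i$). *)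

From HB Require Import structures.
From mathcomp Require Import all_boot all_order all_algebra.
From mathcomp Require Import classical_sets reals.
Set Implicit Arguments. Unset Strict Implicit. Unset Printing Implicit Defensive.
Import Order.TTheory GRing.Theory Num.Theory.

(* Points of the Boolean cube {0,1}^n; false = 0, true = 1. *)
Definition cube (n : nat) := {ffun 'I_n -> bool}.

Definition flip n (x : cube n) (i : 'I_n) : cube n :=
  [ffun j => if j == i then ~~ x j else x j].

Definition dH n (x y : cube n) : nat := #|[set i | x i != y i]|.

Definition sens n (f : cube n -> bool) (x : cube n) : nat :=
  #|[set i | f (flip x i) != f x]|.

(* s_0(f), s_1(f), s(f) (max over an empty set is 0) *)
Definition s0 n (f : cube n -> bool) : nat := \max_(x : cube n | ~~ f x) sens f x.
Definition s1 n (f : cube n -> bool) : nat := \max_(x : cube n | f x) sens f x.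
Definition sensitivity n (f : cube n -> bool) : nat := maxn (s0 f) (s1 f).

Local Open Scope ring_scope.

Definition khr_C n (A B : {set cube n}) : {set cube n * cube n} :=
  [set xy | (xy.1 \in A) && (xy.2 \in B) && (dH xy.1 xy.2 == 1%N)].

Definition koutsoupias_Q (R : nzRingType) n (A B : {set cube n})
  : 'M[R]_(#|A|, #|B|) :=
  \matrix_(i, j) (if (enum_val i, enum_val j) \in khr_C A B then 1 else 0).

Definition norm2 (R : rcfType) m (v : 'cV[R]_m) : R :=
  Num.sqrt (\sum_i (v i 0) ^+ 2).

Definition spectral_norm (R : realType) m k (M : 'M[R]_(m, k)) : R :=
  sup [set norm2 (M *m v) | v in [set v : 'cV[R]_k | norm2 v = 1]]%classic.

(* Restrictions: None = star, Some b = fixed to b *)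
Definition restriction n := {ffun 'I_n -> option bool}.

Definition extends n (rho : restriction n) (x : cube n) : bool :=
  [forall i, if rho i is Some b then x i == b else true].

Definition Rp (R : fieldType) (p : R) n (rho : restriction n) : R :=
  \prod_i (if rho i is Some _ then (1 - p) / 2 else p).

Definition is_filter n (D : {set restriction n}) : Prop :=
  forall rho, rho \in D -> forall (i : 'I_n) (b : bool), rho i = None ->
    [ffun j => if j == i then Some b else rho j] \in D.

Definition condPr (R : fieldType) (p : R) n (E : pred (restriction n))
    (D : {set restriction n}) : R :=
  (\sum_(rho in D | E rho) Rp p rho) / (\sum_(rho in D) Rp p rho).

Definition evA n (f : cube n -> bool) : pred (restriction n) :=
  fun rho => [forall x, extends rho x ==> ~~ f x].
Definition evB n (f : cube n -> bool) : pred (restriction n) :=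
  fun rho => [forall x, extends rho x ==> f x].
Definition evC n (f : cube n -> bool) : pred (restriction n) :=
  fun rho => [exists i, (rho i == None) &&
    ([forall x, extends rho x ==> (f x == x i)] ||
     [forall x, extends rho x ==> (f x == ~~ x i)])].

From HB Require Import structures.
From mathcomp Require Import all_boot all_order all_algebra.
From mathcomp Require Import reals ring lra.
From mathcomp Require boolp classical_sets.
Import Order.TTheory GRing.Theory Num.Theory.
Set Implicit Arguments. Unset Strict Implicit. Unset Printing Implicit Defensive.

(* Each bound counts edges of the bipartite graph joining the zeros and the ones of
   [f] at Hamming distance 1, in which a zero has at most [s0 f] neighbours and a one
   at most [s1 f].  For Khrapchenko, |C| <= s0 |A| and |C| <= s1 |B|; multiplying
   gives |C|^2 <= s0 s1 |A| |B|.  For Koutsoupias, the same row and column bounds on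
   [Q] give ||Q||^2 <= s0 s1 by the Schur test (Cauchy-Schwarz on each row).  For
   Hastad, a restriction leaving a single literal x_i is charged to the restriction
   fixing x_i to the value that makes [f] zero, which multiplies its R_p-weight by
   (1-p)/(2p); a constant-zero restriction is charged at most [s0 f] times, since the
   freed variable is sensitive at every point consistent with it.  Hence
   (1-p)/(2p) Pr[C] <= s0 Pr[A], symmetrically <= s1 Pr[B], and one multiplies again. *)

Section RealInequalities.
Variable R : realFieldType.
Local Open Scope ring_scope.

Lemma ler_sqr_div_mul (a b c s t : R) :
  0 < a -> 0 < b -> 0 <= c -> c <= s * a -> c <= t * b -> c ^+ 2 / (a * b) <= s * t.
Proof.
move=> a0 b0 c0 csa ctb; rewrite ler_pdivrMr ?mulr_gt0 // mulrACA expr2.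
exact: ler_pM.
Qed.

Lemma sqr_sum_wmul_le (I : finType) (w v : I -> R) :
  (forall i, 0 <= w i) ->
  (\sum_i w i * v i) ^+ 2 <= (\sum_i w i) * (\sum_i w i * v i ^+ 2).
Proof.
move=> w0.
have sqrE : (\sum_i w i * v i) ^+ 2 = \sum_i \sum_j w i * w j * (v i * v j).
  rewrite expr2 mulr_suml; apply: eq_bigr => i _; rewrite mulr_sumr.
  by apply: eq_bigr => j _; rewrite mulrACA.
have prodEr : (\sum_i w i) * (\sum_i w i * v i ^+ 2) = \sum_i \sum_j w i * w j * v j ^+ 2.
  rewrite mulr_suml; apply: eq_bigr => i _; rewrite mulr_sumr.
  by apply: eq_bigr => j _; rewrite mulrA.
have prodEl : (\sum_i w i) * (\sum_i w i * v i ^+ 2) = \sum_i \sum_j w i * w j * v i ^+ 2.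
  rewrite mulrC mulr_suml; apply: eq_bigr => i _; rewrite mulr_sumr.
  by apply: eq_bigr => j _; ring.
(* AM-GM termwise: [2 v_i v_j <= v_i^2 + v_j^2]. *)
suff : 2 * \sum_i \sum_j w i * w j * (v i * v j) <=
    \sum_i \sum_j w i * w j * v j ^+ 2 + \sum_i \sum_j w i * w j * v i ^+ 2.
  by rewrite sqrE -prodEr -prodEl; lra.
rewrite -big_split mulr_sumr; apply: ler_sum => i _.
rewrite -big_split mulr_sumr; apply: ler_sum => j _.
rewrite /= -mulrDr mulrCA ler_wpM2l ?mulr_ge0 // -subr_ge0.
by rewrite (_ : _ - _ = (v i - v j) ^+ 2) ?sqr_ge0 //; ring.
Qed.

Lemma schur_test m k (M : 'M[R]_(m, k)) (r c : R) :
  0 <= r -> (forall i j, 0 <= M i j) ->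
  (forall i, \sum_j M i j <= r) -> (forall j, \sum_i M i j <= c) ->
  forall v : 'cV[R]_k, \sum_i ((M *m v) i 0) ^+ 2 <= r * c * \sum_j v j 0 ^+ 2.
Proof.
move=> r0 M0 Mrow Mcol v.
have row_le i : ((M *m v) i 0) ^+ 2 <= r * \sum_j M i j * v j 0 ^+ 2.
  rewrite mxE; apply: le_trans (sqr_sum_wmul_le (fun j => v j 0) (M0 i)) _.
  by rewrite ler_wpM2r // sumr_ge0 // => j _; rewrite mulr_ge0 ?sqr_ge0.
apply: le_trans (ler_sum _ (fun i _ => row_le i)) _.
rewrite -mulr_sumr -mulrA ler_wpM2l // exchange_big mulr_sumr.
by apply: ler_sum => j _; rewrite -mulr_suml ler_wpM2r ?sqr_ge0.
Qed.

End RealInequalities.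

Section SpectralNorm.
Import boolp classical_sets.
Local Open Scope ring_scope.
Local Open Scope classical_set_scope.

Lemma spectral_norm_sqr_le (R : realType) m k (M : 'M[R]_(m, k)) (c : R) : 0 <= c ->
  (forall v : 'cV[R]_k, \sum_i ((M *m v) i 0) ^+ 2 <= c * \sum_j v j 0 ^+ 2) ->
  spectral_norm M ^+ 2 <= c.
Proof.
move=> c0 Mc; rewrite /spectral_norm; set S := [set _ | _ in _].
have [[y Sy]|S0] := pselect (S !=set0); last first.
  rewrite (_ : S = set0) ?sup0 ?expr0n //.
  by apply/seteqP; split => // y Sy; apply: S0; exists y.
have ubS : ubound S (Num.sqrt c).
  move=> _ [v /= v1 <-]; rewrite /norm2 ler_sqrt //.
  have sum_v1 : \sum_j v j 0 ^+ 2 = 1.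
    have v_ge0 : 0 <= \sum_j v j 0 ^+ 2 by apply: sumr_ge0 => j _; apply: sqr_ge0.
    by rewrite -(sqr_sqrtr v_ge0) [Num.sqrt _]v1 expr1n.
  by rewrite -[c]mulr1 -sum_v1 Mc.
have sup_ge0 : 0 <= sup S.
  apply: le_trans (sup_upper_bound _ Sy); last by split; [exists y | exists (Num.sqrt c)].
  by case: Sy => v _ <-; apply: sqrtr_ge0.
rewrite -(sqr_sqrtr c0) ler_sqr ?nnegrE ?sqrtr_ge0 //.
by apply: ge_sup => //; exists y.
Qed.

End SpectralNorm.

Section Sensitivity.
Variables (n : nat) (f : cube n -> bool).
Implicit Types (x y : cube n) (B : {set cube n}).

Lemma dH_sym x y : dH x y = dH y x.
Proof. by apply: eq_card => i; rewrite !inE eq_sym. Qed.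

Lemma dH_eq1_flip x y : dH x y = 1%N -> exists i, y = flip x i.
Proof.
move=> /eqP/cards1P [i xyE]; exists i; apply/ffunP => j; rewrite ffunE.
have := congr1 (fun S : {set 'I_n} => j \in S) xyE; rewrite !inE.
case: (eqVneq j i) => [->|_] /=; rewrite ?eqxx.
  by case: (x i) (y i) => [] [].
by case: (x j) (y j) => [] [].
Qed.

Lemma sum_neighbors_le_sens x B : {in B, forall y, f y != f x} ->
  (\sum_(y in B) (dH x y == 1%N) <= sens f x)%N.
Proof.
move=> fB; rewrite (eq_bigr (fun y => if dH x y == 1%N then 1 else 0)%N); last first.
  by move=> y _; case: (dH x y == 1%N).
rewrite -big_mkcondr sum1dep_card.
apply: leq_trans (leq_imset_card (flip x) _).
apply: subset_leq_card; apply/subsetP => y; rewrite !inE => /andP [yB /eqP xy1].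
have [i yE] := dH_eq1_flip xy1; apply/imsetP; exists i => //.
by rewrite inE -yE; apply: fB.
Qed.

Lemma sens_le_s0 x : ~~ f x -> (sens f x <= s0 f)%N.
Proof. exact: (leq_bigmax_cond (P := fun x => ~~ f x)). Qed.

Lemma sens_le_s1 x : f x -> (sens f x <= s1 f)%N.
Proof. exact: (leq_bigmax_cond (P := fun x => f x)). Qed.

Lemma sens_negf x : sens (fun x => ~~ f x) x = sens f x.
Proof. by apply: eq_card => i; rewrite !inE; case: (f x); case: (f (flip x i)). Qed.

Lemma s0_negf : s0 (fun x => ~~ f x) = s1 f.
Proof. by apply: eq_big => [x|x _]; rewrite ?negbK ?sens_negf. Qed.

Lemma s0_mul_s1_le_sqr : (s0 f * s1 f <= sensitivity f ^ 2)%N.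
Proof. by rewrite -mulnn leq_mul ?leq_maxl ?leq_maxr. Qed.

End Sensitivity.

Local Open Scope ring_scope.

Section Khrapchenko.
Variables (n : nat) (f : cube n -> bool) (A B : {set cube n}).
Hypothesis f0A : {in A, forall x, f x = false}.
Hypothesis f1B : {in B, forall y, f y = true}.

Lemma khr_row_le x : x \in A -> (\sum_(y in B) (dH x y == 1%N) <= s0 f)%N.
Proof.
move=> xA; apply: leq_trans (sens_le_s0 (x := x) _); last by rewrite f0A.
by apply: sum_neighbors_le_sens => y yB; rewrite (f0A xA) (f1B yB).
Qed.

Lemma khr_col_le y : y \in B -> (\sum_(x in A) (dH x y == 1%N) <= s1 f)%N.
Proof.
move=> yB; under eq_bigr do rewrite dH_sym.
apply: leq_trans (sens_le_s1 (x := y) _); last by rewrite f1B.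
by apply: sum_neighbors_le_sens => x xA; rewrite (f0A xA) (f1B yB).
Qed.

Lemma card_khr_C : #|khr_C A B| = (\sum_(x in A) \sum_(y in B) (dH x y == 1%N))%N.
Proof.
rewrite pair_big /= -sum1_card [LHS]big_mkcond [RHS]big_mkcond.
apply: eq_bigr => -[x y] _; rewrite inE /=.
by case: (x \in A); case: (y \in B); case: (_ == _).
Qed.

Lemma card_khr_C_le_s0 : (#|khr_C A B| <= s0 f * #|A|)%N.
Proof. by rewrite card_khr_C mulnC -sum_nat_const leq_sum // => x; apply: khr_row_le. Qed.

Lemma card_khr_C_le_s1 : (#|khr_C A B| <= s1 f * #|B|)%N.
Proof.
by rewrite card_khr_C exchange_big mulnC -sum_nat_const leq_sum // => y; apply: khr_col_le.
Qed.

Lemma khrapchenko_bound (R : realFieldType) : A != set0 -> B != set0 ->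
  #|khr_C A B|%:R ^+ 2 / (#|A|%:R * #|B|%:R) <= (s0 f * s1 f)%:R :> R.
Proof.
move=> A0 B0; rewrite natrM ler_sqr_div_mul ?ltr0n ?card_gt0 // -natrM ler_nat.
  exact: card_khr_C_le_s0.
exact: card_khr_C_le_s1.
Qed.

Section Koutsoupias.
Variable R : realFieldType.
Let Q := koutsoupias_Q R A B.

Lemma koutsoupias_QE i j : Q i j = (dH (enum_val i) (enum_val j) == 1%N)%:R.
Proof. by rewrite mxE inE /= (enum_valP i) (enum_valP j); case: (_ == _). Qed.

Lemma koutsoupias_Q_ge0 i j : 0 <= Q i j.
Proof. by rewrite koutsoupias_QE ler0n. Qed.

Lemma koutsoupias_Q_row_le i : \sum_j Q i j <= (s0 f)%:R.
Proof.
under eq_bigr do rewrite koutsoupias_QE.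
rewrite -natr_sum -(big_enum_val (fun y => (dH (enum_val i) y == 1%N) : nat)) ler_nat.
exact/khr_row_le/enum_valP.
Qed.

Lemma koutsoupias_Q_col_le j : \sum_i Q i j <= (s1 f)%:R.
Proof.
under eq_bigr do rewrite koutsoupias_QE.
rewrite -natr_sum -(big_enum_val (fun x => (dH x (enum_val j) == 1%N) : nat)) ler_nat.
exact/khr_col_le/enum_valP.
Qed.

End Koutsoupias.

Lemma koutsoupias_bound (R : realType) :
  spectral_norm (koutsoupias_Q R A B) ^+ 2 <= (s0 f * s1 f)%:R.
Proof.
apply: spectral_norm_sqr_le => [|v]; first exact: ler0n.
rewrite natrM; apply: schur_test; rewrite ?ler0n //.
- exact: koutsoupias_Q_ge0.
- exact: koutsoupias_Q_row_le.
- exact: koutsoupias_Q_col_le.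
Qed.

End Khrapchenko.

Section Restrictions.
Variable n : nat.
Implicit Types (rho a : restriction n) (i : 'I_n).

Definition fix_var rho i b : restriction n :=
  [ffun j => if j == i then Some b else rho j].

Definition free_var rho i : restriction n :=
  [ffun j => if j == i then None else rho j].

Definition base_point rho : cube n := [ffun i => if rho i is Some b then b else false].

Lemma extends_base_point rho : extends rho (base_point rho).
Proof. by apply/forallP => i; rewrite ffunE; case: (rho i). Qed.

Lemma extends_fix_var rho i b x : rho i = None ->
  extends (fix_var rho i b) x -> extends rho x && (x i == b).
Proof.
move=> rhoi /forallP ext_x; apply/andP; split; last by have := ext_x i; rewrite ffunE eqxx.
apply/forallP => j; have := ext_x j; rewrite ffunE.
by case: eqVneq => [->|//]; rewrite rhoi.
Qed.

Lemma Rp_fix_var (R : numFieldType) (p : R) rho i b : p != 0 -> rho i = None ->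
  Rp p (fix_var rho i b) = (1 - p) / (2 * p) * Rp p rho.
Proof.
move=> p0 rhoi; rewrite /Rp (bigD1 i) // [in RHS](bigD1 i) //= ffunE eqxx rhoi.
rewrite (eq_bigr (fun j => if rho j is Some _ then (1 - p) / 2 else p)); last first.
  by move=> j /negPf ji; rewrite ffunE ji.
by rewrite mulrA; congr (_ * _); field.
Qed.

Lemma Rp_ge0 (R : numFieldType) (p : R) rho : 0 <= p <= 1 -> 0 <= Rp p rho.
Proof.
case/andP => p0 p1; apply: prodr_ge0 => i _.
by case: (rho i) => [_|//]; rewrite divr_ge0 ?subr_ge0.
Qed.

End Restrictions.

Section HastadEdges.
Variables (n : nat) (f : cube n -> bool).
Implicit Types (rho a : restriction n).

Lemma evC_fix_var rho : evC f rho -> exists i b,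
  [/\ rho i = None, evA f (fix_var rho i b) & evB f (fix_var rho i (~~ b))].
Proof.
case/existsP => i /andP [/eqP rhoi lit]; exists i.
case/orP: lit => /forallP fE; [exists false | exists true]; split=> //;
  apply/forallP => x; apply/implyP => /(extends_fix_var rhoi) /andP [ext_x /eqP xi];
  by have := fE x; rewrite ext_x xi => /eqP ->.
Qed.

(* [rho] is charged to [a] when [a] fixes the live variable of [rho] so that [f] is 0. *)
Definition hastad_edge a rho : bool :=
  [exists i, [exists b, [&& rho i == None, a == fix_var rho i b
                          & evB f (fix_var rho i (~~ b))]]].

(* [rho] is recovered from [a] by freeing a variable that is sensitive at the base point of [a]. *)
Lemma card_hastad_edge_le a : evA f a -> (#|[set rho | hastad_edge a rho]| <= s0 f)%N.
Proof.
move=> a0; set x := base_point a.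
have fx0 : f x = false.
  by apply: negbTE; move/forallP: a0 => /(_ x); rewrite extends_base_point.
apply: leq_trans (sens_le_s0 (x := x) _); last by rewrite fx0.
apply: leq_trans (leq_imset_card (free_var a) _).
apply: subset_leq_card; apply/subsetP => rho; rewrite inE.
case/existsP => i /existsP [b /and3P [/eqP rhoi /eqP aE b1]].
apply/imsetP; exists i.
  rewrite inE fx0; move/forallP: b1 => /(_ (flip x i)) /implyP -> //.
  apply/forallP => j; rewrite !ffunE; case: eqVneq => [->|ji].
    by rewrite aE ffunE eqxx.
  by rewrite aE ffunE (negPf ji); case: (rho j).
apply/ffunP => j; rewrite !ffunE; case: eqVneq => [->|ji]; first by rewrite rhoi.
by rewrite aE ffunE (negPf ji).
Qed.

End HastadEdges.

Lemma evA_negf n (f : cube n -> bool) : evA (fun x => ~~ f x) =1 evB f.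
Proof. by move=> rho; apply: eq_forallb => x; rewrite negbK. Qed.

Lemma evC_negf n (f : cube n -> bool) : evC (fun x => ~~ f x) =1 evC f.
Proof.
move=> rho; apply: eq_existsb => i; rewrite [X in _ && X]orbC.
by congr (_ && (_ || _)); apply: eq_forallb => x; case: (f x); case: (x i); case: extends.
Qed.

Section Hastad.
Variables (R : realFieldType) (n : nat) (p : R) (D : {set restriction n}).
Hypotheses (p01 : 0 < p < 1) (filterD : is_filter D).
Implicit Type f : cube n -> bool.

Let Rp_nonneg (rho : restriction n) : 0 <= Rp p rho.
Proof. by apply: Rp_ge0; case/andP: p01 => p0 p1; rewrite !ltW. Qed.

Lemma charge_evC f rho : rho \in D -> evC f rho ->
  (1 - p) / (2 * p) * Rp p rho <=
    \sum_(a in D | evA f a) (if hastad_edge f a rho then Rp p a else 0).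
Proof.
move=> rhoD /evC_fix_var [i [b [rhoi a0 b1]]].
have p0 : p != 0 by case/andP: p01 => p0 _; rewrite gt_eqF.
rewrite (bigD1 (fix_var rho i b)) /=; last by rewrite a0 andbT; apply: filterD.
have -> : hastad_edge f (fix_var rho i b) rho.
  by apply/existsP; exists i; apply/existsP; exists b; rewrite rhoi !eqxx b1.
by rewrite Rp_fix_var // lerDl sumr_ge0 // => a _; case: ifP.
Qed.

Lemma hastad_sum_le_s0 f :
  (1 - p) / (2 * p) * \sum_(rho in D | evC f rho) Rp p rho <=
    (s0 f)%:R * \sum_(a in D | evA f a) Rp p a.
Proof.
rewrite mulr_sumr.
apply: (le_trans (y := \sum_(rho in D | evC f rho) \sum_(a in D | evA f a)
                          (if hastad_edge f a rho then Rp p a else 0))).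
  by apply: ler_sum => rho /andP [rhoD rhoC]; apply: charge_evC.
rewrite exchange_big mulr_sumr /=; apply: ler_sum => a /andP [_ a0].
apply: (le_trans (y := \sum_(rho in [set rho | hastad_edge f a rho]) Rp p a)).
  rewrite [leLHS]big_mkcond [leRHS]big_mkcond /=; apply: ler_sum => rho _.
  by rewrite inE; case: hastad_edge; case: (_ && _).
rewrite sumr_const -[leLHS]mulr_natl ler_wpM2r // ler_nat.
exact: card_hastad_edge_le.
Qed.

Lemma hastad_sum_le_s1 f :
  (1 - p) / (2 * p) * \sum_(rho in D | evC f rho) Rp p rho <=
    (s1 f)%:R * \sum_(b in D | evB f b) Rp p b.
Proof.
have negC : \sum_(rho in D | evC (fun x => ~~ f x) rho) Rp p rho =
             \sum_(rho in D | evC f rho) Rp p rho.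
  by apply: eq_bigl => rho; rewrite evC_negf.
have negA : \sum_(rho in D | evA (fun x => ~~ f x) rho) Rp p rho =
             \sum_(rho in D | evB f rho) Rp p rho.
  by apply: eq_bigl => rho; rewrite evA_negf.
by rewrite -s0_negf -negC -negA; apply: hastad_sum_le_s0.
Qed.

Lemma hastad_bound f : 0 < condPr p (evA f) D -> 0 < condPr p (evB f) D ->
  condPr p (evC f) D ^+ 2 / (condPr p (evA f) D * condPr p (evB f) D)
    * ((1 - p) / (2 * p)) ^+ 2 <= (s0 f * s1 f)%:R.
Proof.
rewrite /condPr; set Z := \sum_(rho in D) _; set SA := \sum_(rho in D | _) _.
set SB := \sum_(rho in D | evB f rho) _; set SC := \sum_(rho in D | evC f rho) _.
move=> A_gt0 B_gt0; have Z_gt0 : 0 < Z.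
  rewrite lt_def sumr_ge0 ?andbT //; apply: contraTneq A_gt0 => ->.
  by rewrite invr0 mulr0 ltxx.
move: A_gt0 B_gt0; rewrite !pmulr_lgt0 ?invr_gt0 // => SA_gt0 SB_gt0.
rewrite (_ : (SC / Z) ^+ 2 / (SA / Z * (SB / Z)) * ((1 - p) / (2 * p)) ^+ 2 =
             ((1 - p) / (2 * p) * SC) ^+ 2 / (SA * SB)); last first.
  by field; case/andP: p01 => p0 _; rewrite !gt_eqF.
rewrite natrM; apply: ler_sqr_div_mul => //.
- case/andP: p01 => p0 p1.
  by rewrite mulr_ge0 ?divr_ge0 ?mulr_ge0 ?subr_ge0 ?sumr_ge0 ?ltW.
- exact: hastad_sum_le_s0.
- exact: hastad_sum_le_s1.
Qed.

End Hastad.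

Theorem mainTheorem11 (R : realType) (n : nat) (f : cube n -> bool) :
  [/\ (* (i) Khrapchenko *)
      (forall A B : {set cube n}, A != set0 -> B != set0 ->
         {in A, forall x, f x = false} -> {in B, forall y, f y = true} ->
         (#|khr_C A B|%:R ^+ 2 / (#|A|%:R * #|B|%:R) : R) <= (s0 f * s1 f)%:R),
      (* (ii) Koutsoupias *)
      (forall A B : {set cube n}, A != set0 -> B != set0 ->
         {in A, forall x, f x = false} -> {in B, forall y, f y = true} ->
         spectral_norm (koutsoupias_Q R A B) ^+ 2 <= (s0 f * s1 f)%:R),
      (* (iii) Hastad *)
      (forall (p : R) (D : {set restriction n}), 0 < p < 1 -> is_filter D ->
         0 < condPr p (evA f) D -> 0 < condPr p (evB f) D ->
         condPr p (evC f) D ^+ 2 / (condPr p (evA f) D * condPr p (evB f) D)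
           * ((1 - p) / (2 * p)) ^+ 2 <= (s0 f * s1 f)%:R)
    & (s0 f * s1 f <= sensitivity f ^ 2)%N].
Proof.
split.
- by move=> A B A0 B0 f0A f1B; apply: khrapchenko_bound.
- by move=> A B _ _ f0A f1B; apply: koutsoupias_bound.
- by move=> p D p01 filterD; apply: hastad_bound.
- exact: s0_mul_s1_le_sqr.
Qed.
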